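(* Let $A$ be a finite nonempty set of actions and $\boldsymbol{v}^0,\boldsymbol{v}^1,\dots\in\mathbb{R}^{|A|}$ an arbitrary sequence of value vectors. Let $\boldsymbol{s}^t$ denote either the regret-matching stored values $\boldsymbol{r}^t$ or the regret-matching$^+$ stored values $\boldsymbol{q}^t$, and $\boldsymbol{\sigma}^t$ the associated policy. Then for every $t$ such that $s^t_a>0$ for some $a\in A$, there exists $b\in A$ with $s^{t+1}_b>0$.
   Context: For $x\in\mathbb{R}$, $x^+:=\max(x,0)$, applied componentwise to vectors. Define $\boldsymbol{\sigma}_{\mathrm{rm}}(\boldsymbol{x}):=\boldsymbol{x}^+/(\boldsymbol{1}\cdot\boldsymbol{x}^+)$ if some $x_a>0$, and $\boldsymbol{1}/|A|$ otherwise. Regret-matching: $\boldsymbol{r}^0=\boldsymbol{0}$, $\boldsymbol{\sigma}^t=\boldsymbol{\sigma}_{\mathrm{rm}}(\boldsymbol{r}^t)$, $\boldsymbol{r}^{t+1}=\boldsymbol{r}^t+\boldsymbol{v}^t-(\boldsymbol{\sigma}^t\cdot\boldsymbol{v}^t)\boldsymbol{1}$. Regret-matching$^+$: $\boldsymbol{q}^0=\boldsymbol{0}$, $\boldsymbol{\sigma}^t=\boldsymbol{\sigma}_{\mathrm{rm}}(\boldsymbol{q}^t)$, $\boldsymbol{q}^{t+1}=\bigl(\boldsymbol{q}^t+\boldsymbol{v}^t-(\boldsymbol{\sigma}^t\cdot\boldsymbol{v}^t)\boldsymbol{1}\bigr)^+$. *)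

From mathcomp Require Import all_boot all_order all_algebra.
Set Implicit Arguments. Unset Strict Implicit. Unset Printing Implicit Defensive.
Import Order.TTheory GRing.Theory Num.Theory.
Local Open Scope ring_scope.

Section RM.
Variables (R : realFieldType) (A : finType).

Definition pospart (x : {ffun A -> R}) : {ffun A -> R} :=
  [ffun a => Num.max (x a) 0].

Definition sigma_rm (x : {ffun A -> R}) : {ffun A -> R} :=
  if [exists a, 0 < x a]
  then [ffun a => pospart x a / (\sum_(b : A) pospart x b)]
  else [ffun a => (#|A|%:R)^-1].

Definition dotp (x y : {ffun A -> R}) : R := \sum_(a : A) x a * y a.

Definition regret_step (s v : {ffun A -> R}) : {ffun A -> R} :=
  [ffun a => s a + v a - dotp (sigma_rm s) v].

Fixpoint rm_r (v : nat -> {ffun A -> R}) (t : nat) : {ffun A -> R} :=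
  match t with
  | 0 => [ffun => 0]
  | t'.+1 => regret_step (rm_r v t') (v t')
  end.

Fixpoint rmp_q (v : nat -> {ffun A -> R}) (t : nat) : {ffun A -> R} :=
  match t with
  | 0 => [ffun => 0]
  | t'.+1 => pospart (regret_step (rmp_q v t') (v t'))
  end.

End RM.

From mathcomp Require Import all_boot all_order all_algebra.
Import Order.TTheory GRing.Theory Num.Theory.
Local Open Scope ring_scope.

(* Write p = s^+ for the stored values s. Since the policy is proportional
   to p, the correction (sigma . v) 1 exactly cancels v against p, so that
   p . (s + v - (sigma . v) 1) = p . s = |s^+|^2 > 0. As p >= 0, some
   coordinate of the updated regrets must then be positive, and taking the
   positive part (for regret-matching^+) keeps it positive. *)

Section RegretStep.
Variables (R : realFieldType) (A : finType).
Implicit Types (x y p s w : {ffun A -> R}).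

Lemma pospart_ge0 x a : 0 <= pospart x a.
Proof. by rewrite ffunE le_max lexx orbT. Qed.

Lemma pospart_gt0 x a : (0 < pospart x a) = (0 < x a).
Proof. by rewrite ffunE lt_max ltxx orbF. Qed.

Lemma dotp_pospart_gt0 x : (exists a, 0 < x a) -> 0 < dotp (pospart x) x.
Proof.
move=> [a xa_gt0].
have term_ge0 b : 0 <= pospart x b * x b.
  rewrite ffunE; case: (leP (x b) 0) => [_|xb_gt0]; first by rewrite mul0r.
  by rewrite mulr_ge0 // ltW.
rewrite /dotp (bigD1 a) //=; apply: ltr_pwDl; last exact: sumr_ge0.
by rewrite mulr_gt0 // pospart_gt0.
Qed.

Lemma exists_gt0_of_dotp_gt0 p y :
  (forall a, 0 <= p a) -> 0 < dotp p y -> exists b, 0 < y b.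
Proof.
move=> p_ge0 dotp_gt0; case: (pickP (fun b => 0 < y b)) => [b yb_gt0|y_le0].
  by exists b.
suff: dotp p y <= 0 by rewrite leNgt dotp_gt0.
apply: sumr_le0 => b _; apply: mulr_ge0_le0 => //.
by rewrite leNgt y_le0.
Qed.

Lemma dotp_pospart_regret_step s w : (exists a, 0 < s a) ->
  dotp (pospart s) (regret_step s w) = dotp (pospart s) s.
Proof.
move=> [a sa_gt0].
have s_pos : [exists a, 0 < s a] by apply/existsP; exists a.
set S := \sum_b pospart s b.
have S_neq0 : S != 0.
  rewrite gt_eqF // /S (bigD1 a) //=; apply: ltr_pwDl.
  - by rewrite pospart_gt0.
  - by apply: sumr_ge0 => b _; apply: pospart_ge0.
have dotp_sigma : dotp (sigma_rm s) w * S = dotp (pospart s) w.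
  rewrite /dotp /sigma_rm s_pos mulr_suml; apply: eq_bigr => b _.
  by rewrite ffunE mulrAC divfK.
rewrite /dotp; under eq_bigr => b _ do rewrite [regret_step _ _ _]ffunE mulrBr mulrDr.
by rewrite sumrB big_split /= -mulr_suml mulrC dotp_sigma addrK.
Qed.

Lemma regret_step_exists_gt0 s w :
  (exists a, 0 < s a) -> exists b, 0 < regret_step s w b.
Proof.
move=> s_pos; apply: (exists_gt0_of_dotp_gt0 (pospart s)).
- exact: pospart_ge0.
- by rewrite dotp_pospart_regret_step // dotp_pospart_gt0.
Qed.

End RegretStep.

Theorem lemma1 (R : realFieldType) (A : finType) (hA : (0 < #|A|)%N)
    (v : nat -> {ffun A -> R}) (t : nat) :
  ((exists a : A, 0 < rm_r v t a) -> exists b : A, 0 < rm_r v t.+1 b) /\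
  ((exists a : A, 0 < rmp_q v t a) -> exists b : A, 0 < rmp_q v t.+1 b).
Proof.
split=> /(@regret_step_exists_gt0 R A _ (v t)) [b step_b_gt0]; exists b => //=.
by rewrite pospart_gt0.
Qed.
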